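(* Let $(\mathfrak{A},\mathfrak{A}_0)$ be a CQ*-algebra as in the context, let $H\in\mathfrak{A}_0$ and set $\alpha_t^H(X)=e^{itH}Xe^{-itH}$. Then for every $X\in\mathfrak{A}$: $\lim_{t\to0}\|e^{itH}X-X\|=0$, $\lim_{t\to0}\|Xe^{itH}-X\|=0$, $\lim_{t\to0}\left\|\frac{e^{itH}-I}{t}X-iHX\right\|=0$, $\lim_{t\to0}\left\|X\frac{e^{itH}-I}{t}-iXH\right\|=0$, $\lim_{t\to0}\|\alpha_t^H(X)-X\|=0$, and $\lim_{t\to0}\left\|\frac{\alpha_t^H(X)-X}{t}-i[H,X]\right\|=0$, where $[H,X]=HX-XH$.
   Context: Let $\mathfrak{A}_0$ be a unital C*-algebra with C*-norm $\|\cdot\|_0$ and unit $I$, and $\|\cdot\|$ another norm on $\mathfrak{A}_0$ with $\|A\|\le\|A\|_0$, $\|AB\|\le\|A\|\,\|B\|_0$, $\|A^*\|=\|A\|$. $\mathfrak{A}$ is the $\|\cdot\|$-completion of $\mathfrak{A}_0$ (norm still $\|\cdot\|$), and for $X\in\mathfrak{A}$, $A\in\mathfrak{A}_0$ and $A_n\in\mathfrak{A}_0$ with $\|A_n-X\|\to0$, $XA:=\lim A_nA$, $AX:=\lim AA_n$; these satisfy $\|XA\|\le\|X\|\|A\|_0$, $\|AX\|\le\|A\|_0\|X\|$. $e^{itH}\in\mathfrak{A}_0$ is defined by the functional calculus of $\mathfrak{A}_0$. *)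

From HB Require Import structures.
From mathcomp Require Import all_boot all_order all_algebra.
From mathcomp Require Import all_classical all_reals all_analysis.
From mathcomp.real_closed Require Import complex.
Import Order.TTheory GRing.Theory Num.Theory.
Import numFieldNormedType.Exports.
Set Implicit Arguments.
Unset Strict Implicit.
Unset Printing Implicit Defensive.
Local Open Scope classical_set_scope.
Local Open Scope ring_scope.
Local Open Scope complex_scope.

(* A unital C*-algebra over C = R[i], presented as a complex Banach space
   (completeNormedModType R[i], carrying the C*-norm `|.|_0 and its
   topology) together with a multiplication, a unit and an involution
   satisfying the usual axioms.  (The ring operations are given explicitly
   because HB cannot join the library's algebra and normed-module
   hierarchies.) *)
Definition is_unital_Cstar (R : realType) (V : completeNormedModType R[i])
    (mul : V -> V -> V) (one : V) (star : V -> V) : Prop :=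
  (forall x y z, mul x (mul y z) = mul (mul x y) z) /\
  (forall x, mul one x = x /\ mul x one = x) /\
  (forall (a : R[i]) x y z, mul (a *: x + y) z = a *: mul x z + mul y z) /\
  (forall (a : R[i]) x y z, mul z (a *: x + y) = a *: mul z x + mul z y) /\
  (forall x y, `|mul x y| <= `|x| * `|y|) /\
  (forall x, star (star x) = x) /\
  (forall (a : R[i]) x y, star (a *: x + y) = a^* *: star x + star y) /\
  (forall x y, star (mul x y) = mul (star y) (star x)) /\
  (forall x, `|mul (star x) x| = `|x| ^+ 2).

Fixpoint cpow (R : realType) (V : completeNormedModType R[i])
    (mul : V -> V -> V) (one : V) (h : V) (n : nat) : V :=
  if n is n'.+1 then mul h (cpow mul one h n') else one.

(* The exponential, as the sum of the power series (which is what the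
   functional calculus gives for e^{z h}). *)
Definition expA (R : realType) (V : completeNormedModType R[i])
    (mul : V -> V -> V) (one : V) (h : V) : V :=
  limn (series (fun n => (n`!%:R : R[i])^-1 *: cpow mul one h n)).

Definition eitH (R : realType) (V : completeNormedModType R[i])
    (mul : V -> V -> V) (one : V) (t : R) (H : V) : V :=
  expA mul one ((t%:C * 'i) *: H).

(* The CQ*-algebra setting of the context: A is the completion of A0 with
   respect to the norm a |-> `|j a|, realised through the injective linear
   map j : A0 -> A with dense range, with
     `|j a| <= `|a|_0,  `|j (a b)| <= `|j a| `|b|_0,  `|j a^*| = `|j a|,
   and the products X A := lim A_n A, A X := lim A A_n
   (for any A_n in A0 with j A_n --> X) given by rmul and lmul. *)
Record CQstar_setting (R : realType) (A0 : completeNormedModType R[i])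
    (mul : A0 -> A0 -> A0) (star : A0 -> A0)
    (A : completeNormedModType R[i]) (j : {linear A0 -> A})
    (lmul : A0 -> A -> A) (rmul : A -> A0 -> A) : Prop := {
  cq_inj : injective j;
  cq_dense : closure (range j) = [set: A];
  cq_le : forall a : A0, `|j a| <= `|a|;
  cq_mul : forall a b : A0, `|j (mul a b)| <= `|j a| * `|b|;
  cq_star : forall a : A0, `|j (star a)| = `|j a|;
  cq_rmul : forall (X : A) (a : A0) (u : nat -> A0),
      (fun n => j (u n)) @ \oo --> X ->
      (fun n => j (mul (u n) a)) @ \oo --> rmul X a;
  cq_lmul : forall (X : A) (a : A0) (u : nat -> A0),
      (fun n => j (u n)) @ \oo --> X ->
      (fun n => j (mul a (u n))) @ \oo --> lmul a X
}.

From HB Require Import structures.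
From mathcomp Require Import all_boot all_order all_algebra.
From mathcomp Require Import all_classical all_reals all_analysis.
From mathcomp.real_closed Require Import complex.
From mathcomp Require Import lra.
Import Order.TTheory GRing.Theory Num.Theory.
Import numFieldNormedType.Exports.
Local Open Scope classical_set_scope.
Local Open Scope ring_scope.
Local Open Scope complex_scope.

(* Summing the exponential series gives, in the C*-norm and for small t,
   |e^{itH} - I| <= 2 |H| |t|  and  |(e^{itH} - I)/t - iH| <= 2 |H|^2 |t|.
   The module actions of A0 on the completion are bilinear and bounded,
   |AX| <= |A|_0 |X| and |XA| <= |X| |A|_0, as one sees by passing to the limit
   along a sequence of A0 converging to X.  Every quantity of the statement is
   therefore O(|t|); for alpha_t, the difference quotient minus i[H, X] is
   (e^{itH} X) D'_t - i (e^{itH} X - X) H + D_t X,  where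
   D_t = (e^{itH} - I)/t - iH  and  D'_t = -D_{-t}. *)

Section ComplexNorm.
Context {R : realType}.
Implicit Types (a b : R[i]) (t : R).

Lemma normCE a : `|a| = (complex.Re `|a|)%:C.
Proof. by rewrite RRe_real // ger0_real. Qed.

Lemma Re_normM a b : complex.Re `|a * b| = complex.Re `|a| * complex.Re `|b|.
Proof. by rewrite normrM (normCE a) (normCE b) -rmorphM. Qed.

Lemma Re_normV a : complex.Re `|a^-1| = (complex.Re `|a|)^-1.
Proof. by rewrite normfV (normCE a) -fmorphV. Qed.

Lemma Re_normC t : complex.Re `|t%:C| = `|t|.
Proof. by rewrite normc_def /= expr0n /= addr0 sqrtr_sqr. Qed.

Lemma Re_norm_i : complex.Re `|'i : R[i]| = 1.
Proof. by rewrite normc_def /= expr0n /= add0r expr1n sqrtr1. Qed.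

Lemma Re_norm_invfact n : complex.Re `|(n`!%:R : R[i])^-1| <= 1.
Proof.
rewrite Re_normV -(rmorph_nat (real_complex R)) Re_normC normr_nat.
by rewrite invf_le1 ?ltr0n ?fact_gt0 // ler1n fact_gt0.
Qed.

Lemma posC_real (e : R[i]) : 0 < e -> exists2 r : R, 0 < r & e = r%:C.
Proof.
rewrite ltcE => /andP[/eqP Im_e e0]; exists (complex.Re e) => //.
by apply/eqP; rewrite eq_complex /= Im_e !eqxx.
Qed.

End ComplexNorm.

Section RealNorm.
Context {R : realType} {V : normedModType R[i]}.
Implicit Types (x y : V) (a : R[i]).

(* The norm of a normed space over R[i] is valued in R[i]; working with its
   real part lets lra and nra handle the norm estimates. *)
Definition rnorm x : R := complex.Re `|x|.

Lemma rnormE x : `|x| = (rnorm x)%:C.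
Proof. by rewrite RRe_real // ger0_real. Qed.

Lemma rnorm_ge0 x : 0 <= rnorm x.
Proof. by rewrite -ler0c -rnormE. Qed.

Lemma rnormD x y : rnorm (x + y) <= rnorm x + rnorm y.
Proof. by rewrite -lecR rmorphD /= -!rnormE ler_normD. Qed.

Lemma rnormN x : rnorm (- x) = rnorm x.
Proof. by rewrite /rnorm normrN. Qed.

Lemma rnormZ a x : rnorm (a *: x) = complex.Re `|a| * rnorm x.
Proof. by rewrite /rnorm normrZ (normCE a) rnormE -rmorphM. Qed.

Lemma rnorm_sum {I : Type} (s : seq I) (F : I -> V) :
  rnorm (\sum_(k <- s) F k) <= \sum_(k <- s) rnorm (F k).
Proof.
rewrite -lecR -rnormE rmorph_sum /=.
under [X in _ <= X]eq_bigr do rewrite -rnormE.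
exact: ler_norm_sum.
Qed.

Lemma cvgr_rnormP {T} {F : set_system T} {FF : Filter F} (f : T -> V) l :
  f @ F --> l <-> forall e, 0 < e -> \forall x \near F, rnorm (l - f x) <= e.
Proof.
split=> [/cvgrPdist_le fl e e0|fl].
  have := fl e%:C; rewrite ltcR => /(_ e0); apply: filterS => x.
  by rewrite rnormE lecR.
apply/cvgrPdist_le => _ /posC_real[e e0 ->].
by apply: filterS (fl _ e0) => x; rewrite rnormE lecR.
Qed.

Lemma cvg_rnorm {T} {F : set_system T} {FF : Filter F} {f : T -> V} {l : V} :
  f @ F --> l -> rnorm (f x) @[x --> F] --> rnorm l.
Proof.
move=> /cvgr_rnormP fl; apply/cvgrPdist_le => e /fl; apply: filterS => x le_e.
have := rnormD (l - f x) (f x); have := rnormD (f x - l) l.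
rewrite !subrK -opprB rnormN ler_norml; lra.
Qed.

Lemma cvg0_rnorm_le_linear (g : R -> V) (K C : R) :
  (forall t, t != 0 -> `|t| * K <= 1/2 -> rnorm (g t) <= C * `|t|) ->
  (fun t => (`|g t| : R[i]^o)) @ 0^' --> (0 : R[i]^o).
Proof.
move=> gC; apply/norm_cvg0P/cvgr_rnormP => e e0.
have K1 : 0 < `|K| + 1 by rewrite ltr_pwDr ?normr_ge0.
have C1 : 0 < `|C| + 1 by rewrite ltr_pwDr ?normr_ge0.
near=> t; rewrite sub0r rnormN.
have t0 : t != 0 by near: t; exact: nbhs_dnbhs_neq.
have tK : `|t| < (2 * (`|K| + 1))^-1.
  by near: t; apply: dnbhs0_lt; rewrite invr_gt0; lra.
have tC : `|t| < e / (`|C| + 1) by near: t; apply: dnbhs0_lt; exact: divr_gt0.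
move: tK tC; rewrite ltr_pdivlMr // -[_^-1]div1r ltr_pdivlMr; last lra.
move=> tK tC; apply: le_trans (gC t t0 _) _.
  have := ler_norm K; have := normr_ge0 t; nra.
have := ler_norm C; have := normr_ge0 t; nra.
Unshelve. all: by end_near.
Qed.

Lemma closure_range_cvg (U : normedModType R[i]) (f : U -> V) y :
  closure (range f) y -> exists u : nat -> U, (fun n => f (u n)) @ \oo --> y.
Proof.
move=> fy; have near_y (n : nat) : exists z, rnorm (y - f z) < n.+1%:R^-1.
  case: (fy (ball y (n.+1%:R^-1)%:C)) => [|_ [[z _ <-]]].
    by apply: nbhsx_ballx; rewrite ltcR invr_gt0 ltr0n.
  by rewrite -ball_normE /ball_ /= rnormE ltcR => ?; exists z.
have [u hu] := choice near_y; exists u.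
apply/cvgr_rnormP => e e0; near=> n; apply/ltW/(lt_trans (hu n)).
by near: n; exact: (near_infty_natSinv_lt (PosNum e0)).
Unshelve. all: by end_near.
Qed.

End RealNorm.

Section LinearFun.
Context {K : pzRingType} {U W : lmodType K} {f : U -> W}.
Hypothesis f_linear : linear f.

Lemma linear_fun0 : f 0 = 0.
Proof.
have := f_linear 1 0 0; rewrite !scale1r addr0 => f00.
by apply: (addrI (f 0)); rewrite addr0 -f00.
Qed.

Lemma linear_funD : {morph f : x y / x + y}.
Proof. by move=> x y; have := f_linear 1 x y; rewrite !scale1r. Qed.

Lemma linear_funZ c : {morph f : x / c *: x}.
Proof. by move=> x; rewrite -[c *: x]addr0 f_linear linear_fun0 addr0. Qed.

Lemma linear_funB : {morph f : x y / x - y}.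
Proof. by move=> x y; rewrite linear_funD -scaleN1r linear_funZ scaleN1r. Qed.

End LinearFun.

Lemma sum_geometric_le {R : realFieldType} (r : R) n d : 0 <= r <= 1/2 ->
  \sum_(n <= k < n + d) r ^+ k <= 2 * r ^+ n.
Proof.
move=> /andP[r0 r1].
suff : \sum_(n <= k < n + d) r ^+ k + 2 * r ^+ (n + d) <= 2 * r ^+ n.
  by have := exprn_ge0 (n + d) r0; lra.
elim: d => [|d IH]; first by rewrite addn0 big_geq // add0r.
rewrite addnS big_nat_recr ?leq_addr //= exprS.
have : 0 <= r ^+ (n + d) by exact: exprn_ge0.
nra.
Qed.

Section ExpSeries.
Context {R : realType} {V : completeNormedModType R[i]}.
Context {mul : V -> V -> V} {one : V}.
Hypothesis mul_one : forall x, mul x one = x.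
Hypothesis rnorm_mul : forall x y, rnorm (mul x y) <= rnorm x * rnorm y.

Local Notation exp_term h n := ((n`!%:R : R[i])^-1 *: cpow mul one h n).

Lemma rnorm_cpow h n : (0 < n)%N -> rnorm (cpow mul one h n) <= rnorm h ^+ n.
Proof.
case: n => // n _; elim: n => [|n IH] /=; first by rewrite mul_one expr1.
rewrite exprS; apply: le_trans (rnorm_mul _ _) _.
by apply: ler_wpM2l; [exact: rnorm_ge0 | exact: IH].
Qed.

Lemma rnorm_exp_term h n : (0 < n)%N -> rnorm (exp_term h n) <= rnorm h ^+ n.
Proof.
move=> n0; rewrite rnormZ -[X in _ <= X]mul1r.
apply: ler_pM; rewrite ?rnorm_ge0 ?Re_norm_invfact ?rnorm_cpow //.
by rewrite -ler0c -normCE.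
Qed.

Lemma rnorm_exp_tail h n d : rnorm h <= 1/2 -> (0 < n)%N ->
  rnorm (\sum_(n <= k < n + d) exp_term h k) <= 2 * rnorm h ^+ n.
Proof.
move=> h_small n0; have h_range : 0 <= rnorm h <= 1/2 by rewrite rnorm_ge0.
apply: le_trans (rnorm_sum _ _) (le_trans _ (sum_geometric_le _ n d h_range)).
apply: ler_sum_nat => k /andP[nk _]; apply: rnorm_exp_term.
exact: leq_trans n0 nk.
Qed.

Lemma cvg_expA h : rnorm h <= 1/2 ->
  series (fun n => exp_term h n) @ \oo --> expA mul one h.
Proof.
move=> h_small; suff : cvgn (series (fun n => exp_term h n)) by [].
apply/cauchy_cvgP/cauchy_seriesP => _ /posC_real[e e0 ->].
have [N _ N_tail] : \forall n \near \oo, (0 < n)%N /\ 2 * rnorm h ^+ n < e.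
  near=> n; split; first by near: n; exists 1%N.
  suff : `|rnorm h ^+ n| < e / 2.
    by rewrite ger0_norm ?exprn_ge0 ?rnorm_ge0 //; lra.
  near: n; apply: (cvgr0_norm_lt (fun n => rnorm h ^+ n)); last lra.
  by apply: cvg_expr; rewrite ger0_norm ?rnorm_ge0 //; lra.
exists ([set m | (N <= m)%N], [set m | (N <= m)%N]) => [|[m p] /= [Nm Np]].
  by split; exists N.
have [mp|pm] := leqP m p; last by rewrite big_geq ?normr0 ?ltcR // ltnW.
have [m0 tail_m] := N_tail m Nm.
rewrite -(subnKC mp) rnormE ltcR.
exact: le_lt_trans (rnorm_exp_tail _ _ _ h_small m0) tail_m.
Unshelve. all: by end_near.
Qed.

Lemma rnorm_expA_sub1_sub h : rnorm h <= 1/2 ->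
  rnorm (expA mul one h - one - h) <= 2 * rnorm h ^+ 2.
Proof.
move=> h_small.
have tail_cvg : (fun N => series (fun n => exp_term h n) N - one - h) @ \oo -->
    expA mul one h - one - h.
  apply: cvgB; last exact: cvg_cst.
  by apply: cvgB; [exact: cvg_expA | exact: cvg_cst].
apply: (ler_cvg_to (cvg_rnorm tail_cvg) (cvg_cst _)).
near=> N; have N2 : (2 <= N)%N by near: N; exists 2%N.
rewrite /series /= big_ltn ?(leq_trans _ N2) // big_ltn //=.
rewrite fact0 invr1 !scale1r mul_one.
rewrite [one + _]addrC addrK addrC addKr -(subnKC N2).
exact: rnorm_exp_tail.
Unshelve. all: by end_near.
Qed.

Lemma rnorm_scale_ti t (H : V) : rnorm ((t%:C * 'i) *: H) = `|t| * rnorm H.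
Proof. by rewrite rnormZ Re_normM Re_normC Re_norm_i mulr1. Qed.

Lemma rnorm_eitH_sub1 t H : `|t| * rnorm H <= 1/2 ->
  rnorm (eitH mul one t H - one) <= 2 * rnorm H * `|t|.
Proof.
rewrite /eitH -rnorm_scale_ti => h_small; set h := (t%:C * 'i) *: H.
have := rnorm_expA_sub1_sub _ h_small.
have := rnormD (expA mul one h - one - h) h; have h0 := rnorm_ge0 h.
have : rnorm h ^+ 2 <= rnorm h / 2 by rewrite expr2; nra.
rewrite subrK rnorm_scale_ti; lra.
Qed.

Lemma rnorm_eitH_quotient t H : t != 0 -> `|t| * rnorm H <= 1/2 ->
  rnorm ((t%:C)^-1 *: (eitH mul one t H - one) - 'i *: H)
    <= 2 * rnorm H ^+ 2 * `|t|.
Proof.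
rewrite /eitH -rnorm_scale_ti => t0 h_small; set h := (t%:C * 'i) *: H.
have tC : t%:C != 0 by rewrite eq_complex /= negb_and t0.
have -> : (t%:C)^-1 *: (expA mul one h - one) - 'i *: H =
    (t%:C)^-1 *: (expA mul one h - one - h).
  by rewrite [in RHS]scalerBr scalerA mulrA mulVf // mul1r.
rewrite rnormZ Re_normV Re_normC mulrC ler_pdivrMr ?normr_gt0 //.
apply: le_trans (rnorm_expA_sub1_sub _ h_small) _.
by rewrite rnorm_scale_ti exprMn; lra.
Qed.

End ExpSeries.

Section UnitalCstar.
Context {R : realType} {A0 : completeNormedModType R[i]}.
Context {mul : A0 -> A0 -> A0} {one : A0} {star : A0 -> A0}.
Hypothesis hA0 : is_unital_Cstar mul one star.

Lemma Cstar_mul1r x : mul one x = x.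
Proof. by case: hA0 => _ [/(_ x)[]]. Qed.

Lemma Cstar_mulr1 x : mul x one = x.
Proof. by case: hA0 => _ [/(_ x)[]]. Qed.

Lemma Cstar_mull_linear z : linear (mul^~ z).
Proof. by move=> a x y; case: hA0 => _ [_ [-> _]]. Qed.

Lemma Cstar_mulr_linear z : linear (mul z).
Proof. by move=> a x y; case: hA0 => _ [_ [_ [-> _]]]. Qed.

Lemma Cstar_rnormM x y : rnorm (mul x y) <= rnorm x * rnorm y.
Proof.
case: hA0 => _ [_ [_ [_ [normM _]]]].
by rewrite -lecR rmorphM /= -!rnormE normM.
Qed.

Lemma Cstar_starM x y : star (mul x y) = mul (star y) (star x).
Proof. by case: hA0 => _ [_ [_ [_ [_ [_ [_ [-> _]]]]]]]. Qed.

Lemma Cstar_rnorm_star x : rnorm (star x) = rnorm x.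
Proof.
case: hA0 => _ [_ [_ [_ [_ [starK [_ [_ Cstar_id]]]]]]].
suff le_star y : rnorm y <= rnorm (star y).
  by apply/eqP; rewrite eq_le le_star andbT -{2}(starK x) le_star.
have : rnorm (mul (star y) y) = rnorm y ^+ 2.
  by apply/complexI; rewrite -rnormE Cstar_id rnormE rmorphXn.
have := Cstar_rnormM (star y) y.
have := rnorm_ge0 y; have := rnorm_ge0 (star y); nra.
Qed.

End UnitalCstar.

Section CQstar.
Context {R : realType} {A0 : completeNormedModType R[i]}.
Context {mul : A0 -> A0 -> A0} {one : A0} {star : A0 -> A0}.
Hypothesis hA0 : is_unital_Cstar mul one star.
Context {A : completeNormedModType R[i]} {j : {linear A0 -> A}}.
Context {lmul : A0 -> A -> A} {rmul : A -> A0 -> A}.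
Hypothesis hCQ : CQstar_setting mul star j lmul rmul.

Lemma CQ_approx (X : A) : exists u : nat -> A0, (fun n => j (u n)) @ \oo --> X.
Proof. by apply: closure_range_cvg; rewrite (cq_dense hCQ). Qed.

Lemma rnorm_j_mulr a b : rnorm (j (mul a b)) <= rnorm (j a) * rnorm b.
Proof. by rewrite -lecR rmorphM /= -!rnormE (cq_mul hCQ). Qed.

(* The involution is isometric for both norms, which turns the right-hand
   bound into the left-hand one. *)
Lemma rnorm_j_mull a b : rnorm (j (mul a b)) <= rnorm a * rnorm (j b).
Proof.
have rnorm_j_star x : rnorm (j (star x)) = rnorm (j x).
  by rewrite /rnorm (cq_star hCQ).
rewrite -rnorm_j_star (Cstar_starM hA0) mulrC -(rnorm_j_star b).
rewrite -(Cstar_rnorm_star hA0 a).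
exact: rnorm_j_mulr.
Qed.

Lemma lmul_eq {a : A0} {X Y : A} {u : nat -> A0} :
  (fun n => j (u n)) @ \oo --> X ->
  (fun n => j (mul a (u n))) @ \oo --> Y -> lmul a X = Y.
Proof.
move=> uX aY; rewrite -(cvg_lim (@norm_hausdorff _ _) (cq_lmul hCQ uX)).
by rewrite (cvg_lim (@norm_hausdorff _ _) aY).
Qed.

Lemma rmul_eq {a : A0} {X Y : A} {u : nat -> A0} :
  (fun n => j (u n)) @ \oo --> X ->
  (fun n => j (mul (u n) a)) @ \oo --> Y -> rmul X a = Y.
Proof.
move=> uX aY; rewrite -(cvg_lim (@norm_hausdorff _ _) (cq_rmul hCQ uX)).
by rewrite (cvg_lim (@norm_hausdorff _ _) aY).
Qed.

Lemma lmul1 X : lmul one X = X.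
Proof.
have [u uX] := CQ_approx X; apply: (lmul_eq uX).
by under eq_fun do rewrite (Cstar_mul1r hA0).
Qed.

Lemma rmul1 X : rmul X one = X.
Proof.
have [u uX] := CQ_approx X; apply: (rmul_eq uX).
by under eq_fun do rewrite (Cstar_mulr1 hA0).
Qed.

Lemma lmul_linear X : linear (lmul^~ X).
Proof.
move=> c a b; have [u uX] := CQ_approx X; apply: (lmul_eq uX).
under eq_fun do rewrite (Cstar_mull_linear hA0) linearP.
exact: cvgD (cvgZ (cvg_cst c) (cq_lmul hCQ uX)) (cq_lmul hCQ uX).
Qed.

Lemma rmul_linear X : linear (rmul X).
Proof.
move=> c a b; have [u uX] := CQ_approx X; apply: (rmul_eq uX).
under eq_fun do rewrite (Cstar_mulr_linear hA0) linearP.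
exact: cvgD (cvgZ (cvg_cst c) (cq_rmul hCQ uX)) (cq_rmul hCQ uX).
Qed.

Lemma rmul_linearl a : linear (rmul^~ a).
Proof.
move=> c X Y; have [u uX] := CQ_approx X; have [v vY] := CQ_approx Y.
have cuv : (fun n => j (c *: u n + v n)) @ \oo --> c *: X + Y.
  under eq_fun do rewrite linearP.
  exact: cvgD (cvgZ (cvg_cst c) uX) vY.
apply: (rmul_eq cuv).
under eq_fun do rewrite (Cstar_mull_linear hA0) linearP.
exact: cvgD (cvgZ (cvg_cst c) (cq_rmul hCQ uX)) (cq_rmul hCQ vY).
Qed.

Lemma rnorm_lmul a X : rnorm (lmul a X) <= rnorm a * rnorm X.
Proof.
have [u uX] := CQ_approx X.
apply: ler_cvg_to (cvg_rnorm (cq_lmul hCQ (a := a) uX))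
  (cvgM (cvg_cst _) (cvg_rnorm uX)) _.
by apply: nearW => n; exact: rnorm_j_mull.
Qed.

Lemma rnorm_rmul X a : rnorm (rmul X a) <= rnorm X * rnorm a.
Proof.
have [u uX] := CQ_approx X.
apply: ler_cvg_to (cvg_rnorm (cq_rmul hCQ (a := a) uX))
  (cvgM (cvg_rnorm uX) (cvg_cst _)) _.
by apply: nearW => n; exact: rnorm_j_mulr.
Qed.

Lemma lmulBl a b X : lmul (a - b) X = lmul a X - lmul b X.
Proof. exact: (linear_funB (lmul_linear X)). Qed.

Lemma lmulZl c a X : lmul (c *: a) X = c *: lmul a X.
Proof. exact: (linear_funZ (lmul_linear X)). Qed.

Lemma rmulBr X a b : rmul X (a - b) = rmul X a - rmul X b.
Proof. exact: (linear_funB (rmul_linear X)). Qed.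

Lemma rmulDr X a b : rmul X (a + b) = rmul X a + rmul X b.
Proof. exact: (linear_funD (rmul_linear X)). Qed.

Lemma rmulZr X c a : rmul X (c *: a) = c *: rmul X a.
Proof. exact: (linear_funZ (rmul_linear X)). Qed.

Lemma rmulBl X Y a : rmul (X - Y) a = rmul X a - rmul Y a.
Proof. exact: (linear_funB (rmul_linearl a)). Qed.

Section TimeEvolution.
Variables (H : A0) (X : A).
Local Notation U t := (eitH mul one t H).

Let U_sub1 {t : R} : `|t| * rnorm H <= 1/2 ->
  rnorm (U t - one) <= 2 * rnorm H * `|t|.
Proof. exact: rnorm_eitH_sub1 (Cstar_mulr1 hA0) (Cstar_rnormM hA0) t H. Qed.

Let U_quotient {t : R} : t != 0 -> `|t| * rnorm H <= 1/2 ->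
  rnorm ((t%:C)^-1 *: (U t - one) - 'i *: H) <= 2 * rnorm H ^+ 2 * `|t|.
Proof. exact: rnorm_eitH_quotient (Cstar_mulr1 hA0) (Cstar_rnormM hA0) t H. Qed.

Lemma rnorm_lmulU_sub t : `|t| * rnorm H <= 1/2 ->
  rnorm (lmul (U t) X - X) <= 2 * rnorm H * rnorm X * `|t|.
Proof.
move=> small; rewrite -{2}(lmul1 X) -lmulBl mulrAC.
exact: le_trans (rnorm_lmul _ _) (ler_wpM2r (rnorm_ge0 X) (U_sub1 small)).
Qed.

Lemma rnorm_rmulU_sub t : `|t| * rnorm H <= 1/2 ->
  rnorm (rmul X (U t) - X) <= 2 * rnorm H * rnorm X * `|t|.
Proof.
move=> small; rewrite -{2}(rmul1 X) -rmulBr mulrAC [_ * rnorm X]mulrC.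
exact: le_trans (rnorm_rmul _ _) (ler_wpM2l (rnorm_ge0 X) (U_sub1 small)).
Qed.

Lemma rnorm_lmul_quotient t : t != 0 -> `|t| * rnorm H <= 1/2 ->
  rnorm (lmul ((t%:C)^-1 *: (U t - one)) X - 'i *: lmul H X)
    <= 2 * rnorm H ^+ 2 * rnorm X * `|t|.
Proof.
move=> t0 small; rewrite -lmulZl -lmulBl mulrAC.
exact: le_trans (rnorm_lmul _ _) (ler_wpM2r (rnorm_ge0 X) (U_quotient t0 small)).
Qed.

Lemma rnorm_rmul_quotient t : t != 0 -> `|t| * rnorm H <= 1/2 ->
  rnorm (rmul X ((t%:C)^-1 *: (U t - one)) - 'i *: rmul X H)
    <= 2 * rnorm H ^+ 2 * rnorm X * `|t|.
Proof.
move=> t0 small; rewrite -rmulZr -rmulBr mulrAC [_ * rnorm X]mulrC.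
exact: le_trans (rnorm_rmul _ _) (ler_wpM2l (rnorm_ge0 X) (U_quotient t0 small)).
Qed.

Lemma rnorm_lmulU t : `|t| * rnorm H <= 1/2 ->
  rnorm (lmul (U t) X) <= (rnorm one + 1) * rnorm X.
Proof.
move=> small; apply: le_trans (rnorm_lmul _ _) (ler_wpM2r (rnorm_ge0 X) _).
have := rnormD (U t - one) one; rewrite subrK.
have := U_sub1 small; lra.
Qed.

Lemma rnorm_alpha_sub t : `|t| * rnorm H <= 1/2 ->
  rnorm (rmul (lmul (U t) X) (U (- t)) - X)
    <= 2 * rnorm H * rnorm X * (rnorm one + 2) * `|t|.
Proof.
move=> small; set L := lmul (U t) X.
have -> : rmul L (U (- t)) - X = rmul L (U (- t) - one) + (L - X).
  by rewrite rmulBr rmul1 addrA subrK.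
have small' : `|- t| * rnorm H <= 1/2 by rewrite normrN.
have rL : rnorm (rmul L (U (- t) - one))
    <= (rnorm one + 1) * rnorm X * (2 * rnorm H * `|t|).
  apply: le_trans (rnorm_rmul _ _) _.
  apply: ler_pM; rewrite ?rnorm_ge0 ?rnorm_lmulU //.
  by rewrite -(normrN t) U_sub1.
have := rnormD (rmul L (U (- t) - one)) (L - X).
have := rnorm_lmulU_sub t small; lra.
Qed.

Lemma rnorm_alpha_quotient t : t != 0 -> `|t| * rnorm H <= 1/2 ->
  rnorm ((t%:C)^-1 *: (rmul (lmul (U t) X) (U (- t)) - X)
         - 'i *: (lmul H X - rmul X H))
    <= 2 * rnorm H ^+ 2 * rnorm X * (rnorm one + 3) * `|t|.
Proof.
move=> t0 small; set L := lmul (U t) X.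
set Dt := (t%:C)^-1 *: (U t - one) - 'i *: H.
set Dmt := (t%:C)^-1 *: (U (- t) - one) + 'i *: H.
have -> : (t%:C)^-1 *: (rmul L (U (- t)) - X) - 'i *: (lmul H X - rmul X H) =
    rmul L Dmt - 'i *: rmul (L - X) H + lmul Dt X.
  rewrite rmulDr !rmulZr rmulBr rmul1 rmulBl lmulBl !lmulZl lmulBl lmul1.
  rewrite !scalerBr.
  by rewrite addrKA opprK addrACA subrKA opprB.
have rDmt : rnorm Dmt <= 2 * rnorm H ^+ 2 * `|t|.
  have -> : Dmt = - (((- t)%:C)^-1 *: (U (- t) - one) - 'i *: H).
    by rewrite rmorphN invrN scaleNr opprB opprK addrC.
  by rewrite rnormN -(normrN t) U_quotient ?oppr_eq0 ?normrN.
have r1 : rnorm (rmul L Dmt)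
    <= (rnorm one + 1) * rnorm X * (2 * rnorm H ^+ 2 * `|t|).
  apply: le_trans (rnorm_rmul _ _) _.
  by apply: ler_pM; rewrite ?rnorm_ge0 ?rnorm_lmulU.
have r2 : rnorm ('i *: rmul (L - X) H) <= 2 * rnorm H * rnorm X * `|t| * rnorm H.
  rewrite rnormZ Re_norm_i mul1r.
  exact: le_trans (rnorm_rmul _ _)
    (ler_wpM2r (rnorm_ge0 H) (rnorm_lmulU_sub t small)).
have r3 : rnorm (lmul Dt X) <= 2 * rnorm H ^+ 2 * `|t| * rnorm X.
  exact: le_trans (rnorm_lmul _ _)
    (ler_wpM2r (rnorm_ge0 X) (U_quotient t0 small)).
have := rnormD (rmul L Dmt - 'i *: rmul (L - X) H) (lmul Dt X).
have := rnormD (rmul L Dmt) (- ('i *: rmul (L - X) H)); rewrite rnormN.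
lra.
Qed.

End TimeEvolution.

End CQstar.

Theorem lemma5p2 (R : realType) (A0 : completeNormedModType R[i])
    (mul : A0 -> A0 -> A0) (one : A0) (star : A0 -> A0)
    (hA0 : is_unital_Cstar mul one star)
    (A : completeNormedModType R[i]) (j : {linear A0 -> A})
    (lmul : A0 -> A -> A) (rmul : A -> A0 -> A)
    (hCQ : CQstar_setting mul star j lmul rmul) (H : A0) (X : A) :
  let U := fun t : R => eitH mul one t H in
  let alpha := fun (t : R) (Y : A) => rmul (lmul (U t) Y) (U (- t)) in
  ((fun t : R => (`|lmul (U t) X - X| : R[i]^o)) @ 0^' --> (0 : R[i]^o)) /\
  ((fun t : R => (`|rmul X (U t) - X| : R[i]^o)) @ 0^' --> (0 : R[i]^o)) /\
  ((fun t : R => (`|lmul ((t%:C)^-1 *: (U t - one)) X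
                        - 'i *: lmul H X| : R[i]^o)) @ 0^' --> (0 : R[i]^o)) /\
  ((fun t : R => (`|rmul X ((t%:C)^-1 *: (U t - one))
                        - 'i *: rmul X H| : R[i]^o)) @ 0^' --> (0 : R[i]^o)) /\
  ((fun t : R => (`|alpha t X - X| : R[i]^o)) @ 0^' --> (0 : R[i]^o)) /\
  ((fun t : R => (`|(t%:C)^-1 *: (alpha t X - X)
                        - 'i *: (lmul H X - rmul X H)| : R[i]^o))
        @ 0^' --> (0 : R[i]^o)).
Proof.
move=> U alpha; rewrite {}/alpha {}/U.
split; [|split; [|split; [|split; [|split]]]];
  apply: (cvg0_rnorm_le_linear _ (rnorm H)) => t t0 small.
- exact: (rnorm_lmulU_sub hA0 hCQ _ _ _ small).
- exact: (rnorm_rmulU_sub hA0 hCQ _ _ _ small).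
- exact: (rnorm_lmul_quotient hA0 hCQ _ _ _ t0 small).
- exact: (rnorm_rmul_quotient hA0 hCQ _ _ _ t0 small).
- exact: (rnorm_alpha_sub hA0 hCQ _ _ _ small).
- exact: (rnorm_alpha_quotient hA0 hCQ _ _ _ t0 small).
Qed.
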